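(* Let $S$ and $T$ be multisets with no element in common, and let $\pi$ be a multiset partition of $S$ and $\tau$ a multiset partition of $T$. Then \[ \tilde h_{\tilde m(\pi)}\,\tilde h_{\tilde m(\tau)}=\sum_{\theta\in\pi\#\tau}\tilde h_{\tilde m(\theta)}. \]
   Context: A multiset partition of a multiset $S$ is a multiset of nonempty multisets whose multiset union is $S$; for such $\pi$, $\tilde m(\pi)$ is the partition whose parts are the multiplicities of the distinct multisets in $\pi$. For a multiset $A$ and set $U$, $A|_U$ is the multiset of elements of $A$ lying in $U$; for a multiset partition $\theta$, $\theta|_U$ is the multiset of the $A|_U$, $A\in\theta$, with empty multisets discarded. $\pi\#\tau$ is the set of multiset partitions $\theta$ of $S\uplus T$ with $\theta|_S=\pi$ and $\theta|_T=\tau$ (restricting to the underlying sets of $S$ and $T$). $Sym=\mathbb{Q}[p_1,p_2,\ldots]$; the induced trivial character basis $\{\tilde h_\lambda\}$ is determined recursively by $h_\lambda=\sum_\sigma\tilde h_{\tilde m(\sigma)}$, the sum over all multiset partitions $\sigma$ of $\{\!\!\{1^{\lambda_1},\ldots,\ell(\lambda)^{\lambda_{\ell(\lambda)}}\}\!\!\}$. *)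

From HB Require Import structures.
From mathcomp Require Import all_boot all_order all_algebra all_fingroup.
From mathcomp Require Import finmap multiset.
From mathcomp Require Import monalg.
From mathcomp Require Import boolp classical_sets fsbigop.

Set Implicit Arguments.
Unset Strict Implicit.
Unset Printing Implicit Defensive.

Import GRing.Theory.
Local Open Scope mset_scope.

Section MultisetPartitions.
Variable K : choiceType.

Definition msupp (A : {mset K}) : pred K := fun x => (0 < A x)%N.

Definition is_mpart (S : {mset K}) (P : {mset {mset K}}) : Prop :=
  (forall A : {mset K}, (0 < P A)%N -> A <> mset0) /\
  (forall x : K, S x = \sum_(A <- enum_mset P) A x)%N.

Definition mrestr (U : pred K) (A : {mset K}) : {mset K} :=
  seq_mset [seq x <- enum_mset A | U x].

Definition prestr (U : pred K) (P : {mset {mset K}}) : {mset {mset K}} :=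
  seq_mset [seq mrestr U A | A <- enum_mset P & mrestr U A != mset0].

Definition msharp (S T : {mset K}) (pi tau : {mset {mset K}}) :
    set {mset {mset K}} :=
  fun theta => is_mpart (msetD S T) theta /\
               prestr (msupp S) theta = pi /\ prestr (msupp T) theta = tau.

Definition mtilde (P : {mset {mset K}}) : seq nat :=
  sort geq [seq P A | A <- finsupp P].

End MultisetPartitions.

Definition is_partition (l : seq nat) : bool :=
  sorted geq l && all (fun x => 0 < x)%N l.

(* the multiset {1^l_1, ..., ell^l_ell} *)
Definition mset_of_part (l : seq nat) : {mset nat} :=
  seq_mset (flatten [seq nseq (nth 0%N l i) i.+1 | i <- iota 0 (size l)]).

(* Symf = Q[p_1, p_2, ...], realized as the polynomial algebra over rat
   in the commuting variables indexed by nat; p_i is the variable i. *)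

Notation Symf := {malg rat[{cmonom nat}]}.

Local Open Scope ring_scope.

Definition pw (i : nat) : Symf := monalg.mkmalgU (monalg.ucm i) 1.

(* complete homogeneous symmetric function
   h_n = (1/n!) sum_{s in S_n} p_{cycle type of s} *)
Definition hn (n : nat) : Symf :=
  (n`!%:R : rat)^-1 *: \sum_(s : 'S_n) \prod_(c in porbits s) pw #|c|.

Definition hl (l : seq nat) : Symf := \prod_(i <- l) hn i.

From Pilot Require Import Defs.
From HB Require Import structures.
From mathcomp Require Import all_boot all_order all_algebra all_fingroup.
From mathcomp Require Import finmap multiset.
From mathcomp Require Import monalg.
From mathcomp Require Import boolp classical_sets fsbigop.
From mathcomp Require Import functions cardinality.

(* Write h(M) ([hmult M]) for the product of the h_{M(x)} over the distinct x in a
   multiset M, so that h_{m~(pi)} = h(pi).  Relabelling the defining recursion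
   of h~ gives h(M) = sum_{sigma partition of M} h~_{m~(sigma)} for every
   multiset M.  As pi and tau have no block in common, h(pi + tau) = h(pi) h(tau);
   expanding both sides and sorting the partitions of the multiset of blocks
   pi + tau by their restrictions (a, b) to pi and tau gives
     sum_{a, b} h~_{m~(a)} h~_{m~(b)} = sum_{a, b} sum_{sigma in a # b} h~_{m~(sigma)}.
   Every pair except the finest one (singletons of pi, singletons of tau) has
   fewer blocks than (pi, tau), so by induction on the number of blocks those
   terms agree, leaving h~_{m~(pi)} h~_{m~(tau)} as the sum over
   {pi} # {tau}.  Flattening the blocks of such a sigma is a bijection onto
   pi # tau that preserves m~; its inverse splits each block of theta into its
   S-part and its T-part. *)

Set Implicit Arguments.
Unset Strict Implicit.
Unset Printing Implicit Defensive.

Import GRing.Theory.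

Local Open Scope mset_scope.

Section BigMset.
Variables (X : choiceType) (R : Type) (idx : R) (op : Monoid.com_law idx).

Lemma big_seq_mset (s : seq X) (F : X -> R) :
  \big[op/idx]_(x <- seq_mset s) F x = \big[op/idx]_(x <- s) F x.
Proof. exact/perm_big/perm_eq_seq_mset. Qed.

Lemma perm_msetD (A B : {mset X}) : perm_eq (A `+` B) (enum_mset A ++ enum_mset B).
Proof. by apply/allP => a _ /=; rewrite count_cat !count_mem_mset msetE2. Qed.

Lemma big_msetD (A B : {mset X}) (F : X -> R) :
  \big[op/idx]_(x <- A `+` B) F x =
  op (\big[op/idx]_(x <- A) F x) (\big[op/idx]_(x <- B) F x).
Proof. by rewrite (perm_big _ (perm_msetD A B)) big_cat. Qed.

End BigMset.

Lemma mset_sumE (X : choiceType) (A : {mset X}) a : A a = \sum_(x <- A) (x == a).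
Proof. by rewrite -count_mem_mset -sum1_count big_mkcond. Qed.

Lemma mset_neq0P (X : choiceType) (A : {mset X}) :
  reflect (exists x, x \in A) (A != mset0).
Proof.
apply: (iffP idP) => [|[x xA]]; last by apply: contraTneq xA => ->; rewrite in_mset0.
by case: (mset_0Vmem A) => [->|[x xA]]; [rewrite eqxx | exists x].
Qed.

Lemma mset1_neq0 (X : choiceType) (a : X) : [mset a] != mset0.
Proof. by apply/mset_neq0P; exists a; rewrite in_mset1. Qed.

Definition mset_map (X Y : choiceType) (f : X -> Y) (A : {mset X}) : {mset Y} :=
  seq_mset (map f A).

Lemma big_mset_map (X Y : choiceType) (R : Type) (idx : R) (op : Monoid.com_law idx)
    (f : X -> Y) (A : {mset X}) (F : Y -> R) :
  \big[op/idx]_(y <- mset_map f A) F y = \big[op/idx]_(x <- A) F (f x).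
Proof. by rewrite big_seq_mset big_map. Qed.

Lemma mset_mapE (X Y : choiceType) (f : X -> Y) (A : {mset X}) y :
  mset_map f A y = \sum_(x <- A) (f x == y).
Proof. by rewrite mset_sumE big_mset_map. Qed.

Lemma mset_mapP (X Y : choiceType) (f : X -> Y) (A : {mset X}) y :
  reflect (exists2 x, x \in A & y = f x) (y \in mset_map f A).
Proof. by rewrite (perm_mem (perm_eq_seq_mset _)); apply: mapP. Qed.

Lemma mset_map_eq0 (X Y : choiceType) (f : X -> Y) (A : {mset X}) :
  (mset_map f A == mset0) = (A == mset0).
Proof. by rewrite -!size_mset_eq0 (perm_size (perm_eq_seq_mset _)) size_map. Qed.

Lemma eq_in_mset_map (X Y : choiceType) (f g : X -> Y) (A : {mset X}) :
  {in A, f =1 g} -> mset_map f A = mset_map g A.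
Proof. by move=> fg; congr seq_mset; apply/eq_in_map. Qed.

Lemma mset_map_comp (X Y Z : choiceType) (f : X -> Y) (g : Y -> Z) (A : {mset X}) :
  mset_map g (mset_map f A) = mset_map (g \o f) A.
Proof. by apply/msetP => z; rewrite !mset_mapE big_mset_map. Qed.

Lemma mset_map_id_in (X : choiceType) (f : X -> X) (A : {mset X}) :
  {in A, f =1 id} -> mset_map f A = A.
Proof. by move=> f_id; rewrite (eq_in_mset_map f_id) /mset_map map_id seq_mset_id. Qed.

Lemma mset_mapK_in (X Y : choiceType) (f : X -> Y) (g : Y -> X) (A : {mset X}) :
  {in A, cancel f g} -> mset_map g (mset_map f A) = A.
Proof. by move=> fK; rewrite mset_map_comp mset_map_id_in. Qed.

Lemma mset_map_inj_in (X Y : choiceType) (f : X -> Y) (A : {mset X}) x :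
  {in A &, injective f} -> x \in A -> mset_map f A (f x) = A x.
Proof.
move=> f_inj xA; rewrite mset_mapE mset_sumE; apply: eq_big_seq => z zA.
by rewrite (inj_in_eq f_inj).
Qed.

Definition mflatten (X : choiceType) (P : {mset {mset X}}) : {mset X} :=
  seq_mset (flatten [seq enum_mset A | A <- enum_mset P]).
Arguments mflatten {X}.

Lemma big_mflatten (X : choiceType) (R : Type) (idx : R) (op : Monoid.com_law idx)
    (P : {mset {mset X}}) (F : X -> R) :
  \big[op/idx]_(x <- mflatten P) F x =
  \big[op/idx]_(A <- P) \big[op/idx]_(x <- enum_mset A) F x.
Proof. by rewrite big_seq_mset big_flatten big_map. Qed.

Lemma mflattenE (X : choiceType) (P : {mset {mset X}}) x :
  mflatten P x = \sum_(A <- P) A x.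
Proof. by rewrite mset_sumE big_mflatten; apply: eq_bigr => A _; rewrite -mset_sumE. Qed.

Lemma mflatten0 (X : choiceType) : mflatten (mset0 : {mset {mset X}}) = mset0.
Proof. by apply/msetP => x; rewrite mflattenE big_mset0 mset0E. Qed.

Lemma mflatten1 (X : choiceType) (A : {mset X}) : mflatten [mset A] = A.
Proof. by apply/msetP => x; rewrite mflattenE enum_msetn big_nseq /= addn0. Qed.

Lemma mflattenD (X : choiceType) (P Q : {mset {mset X}}) :
  mflatten (P `+` Q) = mflatten P `+` mflatten Q.
Proof. by apply/msetP => x; rewrite msetE2 !mflattenE big_msetD. Qed.

Lemma mflatten_eq0 (X : choiceType) (P : {mset {mset X}}) :
  {in P, forall A, A != mset0} -> (mflatten P == mset0) = (P == mset0).
Proof.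
move=> P_neq0; have [->|] := eqVneq P mset0; first by rewrite mflatten0 eqxx.
case/mset_neq0P => A AP; have /mset_neq0P [x xA] := P_neq0 A AP.
apply/negbTE/mset_neq0P; exists x.
by rewrite in_mset mflattenE (big_rem A AP) /= addn_gt0 -in_mset xA.
Qed.

Lemma mrestrE (X : choiceType) (U : pred X) (A : {mset X}) x :
  mrestr U A x = if U x then A x else 0.
Proof.
rewrite /mrestr mset_seqE; case: ifP => Ux; last first.
  by apply/count_memPn; rewrite mem_filter Ux.
rewrite count_filter -count_mem_mset.
by apply: eq_count => y /=; case: eqP => // ->; rewrite Ux.
Qed.

Lemma mem_mrestr (X : choiceType) (U : pred X) (A : {mset X}) x :
  (x \in mrestr U A) = U x && (x \in A).
Proof. by rewrite !in_mset mrestrE; case: (U x). Qed.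

Lemma big_mrestr (X : choiceType) (R : Type) (idx : R) (op : Monoid.com_law idx)
    (U : pred X) (A : {mset X}) (F : X -> R) :
  \big[op/idx]_(x <- mrestr U A) F x = \big[op/idx]_(x <- A | U x) F x.
Proof. by rewrite big_seq_mset big_filter. Qed.

Lemma big_prestr (X : choiceType) (R : Type) (idx : R) (op : Monoid.com_law idx)
    (U : pred X) (P : {mset {mset X}}) (F : {mset X} -> R) :
  \big[op/idx]_(B <- prestr U P) F B =
  \big[op/idx]_(A <- P | mrestr U A != mset0) F (mrestr U A).
Proof. by rewrite big_seq_mset big_map big_filter. Qed.

Lemma prestrE (X : choiceType) (U : pred X) (P : {mset {mset X}}) B :
  prestr U P B = \sum_(A <- P) ((mrestr U A != mset0) && (mrestr U A == B)).
Proof. by rewrite mset_sumE big_prestr big_mkcond; apply: eq_bigr => A _; case: (_ != _). Qed.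

Section MultisetPartition.
Variable X : choiceType.
Implicit Types (M A : {mset X}) (P : {mset {mset X}}).

Lemma mpartP M P :
  is_mpart M P <-> {in P, forall A, A != mset0} /\ M = mflatten P.
Proof.
split=> [[P_neq0 MP]|[P_neq0 ->]]; split.
- by move=> A; rewrite in_mset => /P_neq0 /eqP.
- by apply/msetP => x; rewrite mflattenE MP.
- by move=> A; rewrite -in_mset => /P_neq0 /eqP.
- by move=> x; rewrite mflattenE.
Qed.

Lemma mpart_neq0 M P A : is_mpart M P -> A \in P -> A != mset0.
Proof. by case/mpartP => P_neq0 _; apply: P_neq0. Qed.

Lemma mpart_msubset M P A : is_mpart M P -> A \in P -> A `<=` M.
Proof.
case/mpartP => _ -> AP; apply/msubsetP => x.
by rewrite mflattenE (big_rem A AP) leq_addr.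
Qed.

Lemma mpart_mem M P A x : is_mpart M P -> A \in P -> x \in A -> x \in M.
Proof. by move=> MP AP; apply/msubset_subset/(mpart_msubset MP AP). Qed.

Lemma big_mpart (R : Type) (idx : R) (op : Monoid.com_law idx) M P (F : X -> R) :
  is_mpart M P ->
  \big[op/idx]_(x <- M) F x = \big[op/idx]_(A <- P) \big[op/idx]_(x <- enum_mset A) F x.
Proof. by case/mpartP => _ ->; rewrite big_mflatten. Qed.

Lemma mpart_size M P : is_mpart M P -> size M = \sum_(A <- P) size (enum_mset A).
Proof.
by move=> MP; rewrite -sum1_size (big_mpart _ _ MP); under eq_bigr do rewrite sum1_size.
Qed.

Lemma mpart_size_le M P : is_mpart M P -> size P <= size M.
Proof.
move=> MP; rewrite (mpart_size MP) -sum1_size !big_seq; apply: leq_sum => A AP.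
by rewrite lt0n size_mset_eq0 (mpart_neq0 MP).
Qed.

Definition singletons M : {mset {mset X}} := mset_map (fun a => [mset a]) M.

Lemma mpart_singletons M : is_mpart M (singletons M).
Proof.
apply/mpartP; split=> [_ /mset_mapP [a _ ->]|]; first exact: mset1_neq0.
apply/msetP => x; rewrite mflattenE big_mset_map mset_sumE.
by apply: eq_bigr => a _; rewrite msetnE eq_sym.
Qed.

Lemma mset_size1 A : size A = 1 -> exists a, A = [mset a].
Proof.
case e: (enum_mset A) => [|a [|b s]] // _; exists a.
rewrite -(seq_mset_id A) e; apply/msetP => x.
by rewrite mset_seqE msetnE /= addn0 eq_sym; case: (x == a).
Qed.

Lemma mpart_size_eq M P : is_mpart M P -> size P = size M -> P = singletons M.
Proof.
move=> MP sizeP.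
have size1 A : A \in P -> size A = 1.
  have A_gt0 (B : {mset X}) : B \in P -> 0 < size B.
    by rewrite lt0n size_mset_eq0 => /(mpart_neq0 MP).
  have : \sum_(B <- P) (size (enum_mset B) - 1) = 0.
    apply/eqP; rewrite -(eqn_add2r (\sum_(B <- P) 1)) add0n -big_split /= sum1_size.
    rewrite sizeP (mpart_size MP); apply/eqP/eq_big_seq => B BP.
    by rewrite subnK ?A_gt0.
  move/eqP; rewrite sum_nat_seq_eq0 => /allP sizeP1 AP.
  by have /= := sizeP1 A AP; rewrite subn_eq0 => le1; apply/eqP; rewrite eqn_leq le1 A_gt0.
case/mpartP: MP => _ ->; apply/msetP => B.
rewrite /singletons mset_mapE big_mflatten mset_sumE.
apply: eq_big_seq => C /size1/mset_size1 [c ->].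
by rewrite enum_msetn big_nseq /= addn0.
Qed.

Lemma mpart_mset0 : is_mpart (mset0 : {mset X}) = [set mset0]%classic.
Proof.
apply/seteqP; split => P; last first.
  by move=> ->; apply/mpartP; rewrite mflatten0; split => // A; rewrite in_mset0.
move=> MP; apply/eqP; apply: contraT => /mset_neq0P [A AP].
have /mset_neq0P [x xA] := mpart_neq0 MP AP.
by have := mpart_mem MP AP xA; rewrite in_mset0.
Qed.

End MultisetPartition.

Lemma mpart_mset_map (X Y : choiceType) (f : X -> Y) (M : {mset X}) (P : {mset {mset X}}) :
  is_mpart M P -> is_mpart (mset_map f M) (mset_map (mset_map f) P).
Proof.
case/mpartP => P_neq0 ->; apply/mpartP; split.
  by move=> _ /mset_mapP [A AP ->]; rewrite mset_map_eq0 P_neq0.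
by apply/msetP => y; rewrite mflattenE big_mset_map !mset_mapE big_mflatten;
  under [RHS]eq_bigr do rewrite mset_mapE.
Qed.

Lemma mpart_pair_size_lt (X : choiceType) (P Q : {mset X}) (a b : {mset {mset X}}) :
  is_mpart P a -> is_mpart Q b -> (a, b) != (singletons P, singletons Q) ->
  (size a + size b < size P + size Q)%N.
Proof.
move=> Pa Qb; have la := mpart_size_le Pa; have lb := mpart_size_le Qb.
apply: contraNT; rewrite -leqNgt => le_PQ_ab.
have ea : size a = size P.
  by apply/eqP; rewrite eqn_leq la -(leq_add2r (size b)) (leq_trans _ le_PQ_ab) ?leq_add2l.
have eb : size b = size Q.
  by apply/eqP; rewrite eqn_leq lb -(leq_add2l (size P)) -{2}ea.
by rewrite (mpart_size_eq Pa ea) (mpart_size_eq Qb eb).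
Qed.

Lemma finite_msubset (X : choiceType) (M : {mset X}) :
  finite_set (fun A : {mset X} => msubset A M).
Proof.
rewrite -(seq_mset_id M); elim: (enum_mset M) => [|a s IHs].
  apply: (sub_finite_set (B := [set mset0]%classic)); last exact: finite_set1.
  move=> A /= A_sub; apply/eqP; rewrite -msubset0; apply: msubset_trans A_sub _.
  by apply/msubsetP => x; rewrite mset_seqE mset0E.
rewrite mset_cons; apply: (sub_finite_set (B := (msubset^~ (seq_mset s) `|`
  (fun A => a +` A) @` msubset^~ (seq_mset s))%classic)); last first.
  by rewrite finite_setU; split => //; apply: finite_image.
move=> A /= /msubsetP A_sub; have [aA|aNA] := boolP (a \in A).
- right; exists (A `\ a); last exact: msetB1K.
  apply/msubsetP => x; have := A_sub x; rewrite mset1DE msetB1E.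
  by case: (x == a) => /=; rewrite ?leq_subLR ?subn0.
- left; apply/msubsetP => x; have := A_sub x; rewrite mset1DE.
  by case: eqP => [->|_] //= _; move/mset_eq0P: aNA => ->.
Qed.

Lemma finite_mset_bounded (X : choiceType) (F : {fset X}) n :
  finite_set (fun A : {mset X} => {subset A <= F} /\ forall x, A x <= n).
Proof.
apply: (sub_finite_set _ (finite_msubset (seq_mset (flatten (nseq n (enum_fset F)))))).
move=> A /= [AF A_le]; apply/msubsetP => x.
rewrite mset_seqE count_flatten map_nseq sumn_nseq count_uniq_mem ?fset_uniq //.
have [/AF -> | /mset_eq0P -> //] := boolP (x \in A); by rewrite mul1n.
Qed.

Lemma finite_mpart (X : choiceType) (M : {mset X}) : finite_set (is_mpart M).
Proof.
apply: (sub_finite_set _ (finite_mset_bounded (fset_set (msubset^~ M)) (size M))).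
move=> P MP; split=> [A AP | A].
  rewrite in_fset_set; last exact: finite_msubset.
  by rewrite inE /= (mpart_msubset MP AP).
have [AP | /mset_eq0P -> //] := boolP (A \in P).
have /mset_neq0P [x xA] := mpart_neq0 MP AP.
apply: (@leq_trans (M x)); last by rewrite -count_mem_mset count_size.
case/mpartP: MP => _ ->; rewrite mflattenE mset_sumE; apply: leq_sum => B _.
by case: eqP => [->|//]; rewrite -in_mset.
Qed.

Lemma geq_total : total geq. Proof. by move=> m n; apply: leq_total. Qed.
Lemma geq_trans : transitive geq.
Proof. by move=> n m p le_nm le_pn; apply: leq_trans le_pn le_nm. Qed.
Lemma geq_anti : antisymmetric geq. Proof. by move=> m n; rewrite andbC; apply: anti_leq. Qed.

Lemma mtilde_perm (X Y : choiceType) (P : {mset {mset X}}) (Q : {mset {mset Y}}) :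
  perm_eq [seq P A | A <- finsupp P] [seq Q B | B <- finsupp Q] -> mtilde P = mtilde Q.
Proof. exact/(perm_sortP geq_total geq_trans geq_anti). Qed.

Lemma finsupp_mset_map (X Y : choiceType) (f : X -> Y) (A : {mset X}) :
  {in A &, injective f} -> perm_eq (finsupp (mset_map f A)) (map f (finsupp A)).
Proof.
move=> f_inj; apply: uniq_perm; first exact: fset_uniq.
  by rewrite map_inj_in_uniq ?fset_uniq // => x y; rewrite !msuppE; apply: f_inj.
move=> y; rewrite msuppE; apply/mset_mapP/mapP => [] [x xA ->];
  by exists x; rewrite ?msuppE in xA *.
Qed.

Lemma mtilde_mset_map (X Y : choiceType) (f : {mset X} -> {mset Y}) (P : {mset {mset X}}) :
  {in P &, injective f} -> mtilde (mset_map f P) = mtilde P.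
Proof.
move=> f_inj; apply: mtilde_perm.
apply: perm_trans (perm_map _ (finsupp_mset_map f_inj)) _; rewrite -map_comp.
rewrite (_ : [seq _ | _ <- _] = [seq P A | A <- finsupp P]) //.
by apply/eq_in_map => A; rewrite msuppE => AP /=; apply: mset_map_inj_in.
Qed.

Lemma mtilde_singletons (X : choiceType) (P : {mset {mset X}}) :
  mtilde (singletons P) = mtilde P.
Proof. by apply: mtilde_mset_map => A B _ _; apply: (msetn_inj (ltn0Sn 0)). Qed.

Definition mset_disjoint (X : choiceType) (S T : {mset X}) :=
  forall x, 0 < S x -> T x = 0.

Lemma mset_disjoint_sym (X : choiceType) (S T : {mset X}) :
  mset_disjoint S T -> mset_disjoint T S.
Proof.
by move=> ST x Tx; apply/eqP; rewrite -leqn0 leqNgt; apply: contraL Tx => /ST ->.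
Qed.

Lemma mset_disjoint_notin (X : choiceType) (S T : {mset X}) x :
  mset_disjoint S T -> x \in S -> x \notin T.
Proof. by rewrite in_mset => ST /ST /mset_eq0P. Qed.

Section Hmult.
Local Open Scope ring_scope.

Definition hmult (X : choiceType) (M : {mset X}) : Symf :=
  \prod_(x <- finsupp M) hn (M x).

Lemma hmultD (X : choiceType) (P Q : {mset X}) :
  mset_disjoint P Q -> hmult (P `+` Q) = hmult P * hmult Q.
Proof.
move=> PQ; have QP := mset_disjoint_sym PQ.
have suppD : perm_eq (finsupp (P `+` Q)) (enum_fset (finsupp P) ++ enum_fset (finsupp Q)).
  apply: uniq_perm => [||x]; rewrite ?fset_uniq //; last by rewrite mem_cat !msuppE in_msetD.
  rewrite cat_uniq !fset_uniq andbT /=; apply/hasPn => x; rewrite !msuppE => xQ.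
  exact: mset_disjoint_notin QP xQ.
have PQ_P : {in finsupp P, P `+` Q =1 P}.
  by move=> x; rewrite msuppE in_mset msetE2 => /PQ ->; rewrite addn0.
have PQ_Q : {in finsupp Q, P `+` Q =1 Q}.
  by move=> x; rewrite msuppE in_mset msetE2 => /QP ->.
rewrite /hmult (perm_big _ suppD) big_cat.
(* Rewriting with PQ_P instead would make unification try to identify
   hn (P x) and hn ((P `+` Q) x) by unfolding hn. *)
exact: (f_equal2 *%R (eq_big_seq _ (fun x xP => congr1 hn (PQ_P x xP)))
  (eq_big_seq _ (fun x xQ => congr1 hn (PQ_Q x xQ)))).
Qed.

End Hmult.

Lemma mflatten_prestr (X : choiceType) (U : pred X) (s : {mset {mset X}}) :
  mflatten (prestr U s) = mrestr U (mflatten s).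
Proof.
apply/msetP => x; rewrite mflattenE big_prestr big_mkcond mrestrE mflattenE.
rewrite (eq_bigr (fun A => mrestr U A x)) => [|A _]; last first.
  by case: eqVneq => [->|]; rewrite ?mset0E.
by case: ifP => Ux; under eq_bigr do rewrite mrestrE Ux; rewrite ?big1_eq.
Qed.

Lemma mpart_prestr (X : choiceType) (U : pred X) (M : {mset X}) (s : {mset {mset X}}) :
  is_mpart M s -> is_mpart (mrestr U M) (prestr U s).
Proof.
case/mpartP => _ ->; apply/mpartP; split; last by rewrite mflatten_prestr.
move=> B; rewrite (perm_mem (perm_eq_seq_mset _)) => /mapP [A].
by rewrite mem_filter => /andP [? _] ->.
Qed.

Lemma mrestr_msuppD (X : choiceType) (S T : {mset X}) :
  mset_disjoint S T -> mrestr (Defs.msupp S) (S `+` T) = S.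
Proof.
move=> ST; apply/msetP => x; rewrite mrestrE msetE2 /Defs.msupp.
by case: ifPn => [/ST -> | ]; rewrite ?addn0 // -leqNgt leqn0 => /eqP ->.
Qed.

Lemma mrestr_id (X : choiceType) (U : pred X) (A : {mset X}) :
  {in A, forall x, U x} -> mrestr U A = A.
Proof.
move=> AU; apply/msetP => x; rewrite mrestrE.
by case: ifPn => // /negP Ux; apply/esym/mset_eq0P/negP => /AU.
Qed.

Lemma mrestr_eq0 (X : choiceType) (U : pred X) (A : {mset X}) :
  {in A, forall x, ~~ U x} -> mrestr U A = mset0.
Proof.
move=> AU; apply/msetP => x; rewrite mrestrE mset0E.
by case: ifP => // Ux; apply/mset_eq0P/negP => /AU; rewrite Ux.
Qed.

Lemma mrestr_msupp_msetD (X : choiceType) (S T C : {mset X}) :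
  mset_disjoint S T -> {subset C <= S `+` T} ->
  mrestr (Defs.msupp S) C `+` mrestr (Defs.msupp T) C = C.
Proof.
move=> ST CST; apply/msetP => x; rewrite msetE2 !mrestrE /Defs.msupp.
have [/CST | /mset_eq0P ->] := boolP (x \in C); last by rewrite !if_same.
rewrite in_msetD !in_mset => /orP [Sx | Tx].
- by rewrite Sx (ST x Sx) addn0.
- by rewrite Tx (mset_disjoint_sym ST Tx).
Qed.

Definition msplit (X : choiceType) (V W : pred X) (C : {mset X}) : {mset {mset X}} :=
  seq_mset [seq D <- [:: mrestr V C; mrestr W C] | D != mset0].

Lemma msplitE (X : choiceType) (V W : pred X) (C E : {mset X}) :
  msplit V W C E = ((mrestr V C != mset0) && (mrestr V C == E)) +
                   ((mrestr W C != mset0) && (mrestr W C == E)).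
Proof.
rewrite /msplit mset_seqE /=.
by case: (mrestr V C != mset0); case: (mrestr W C != mset0); rewrite /= ?addn0.
Qed.

Lemma msplitC (X : choiceType) (V W : pred X) (C : {mset X}) :
  msplit V W C = msplit W V C.
Proof. by apply/msetP => E; rewrite !msplitE addnC. Qed.

Lemma mflatten_msplit (X : choiceType) (V W : pred X) (C : {mset X}) :
  mflatten (msplit V W C) = mrestr V C `+` mrestr W C.
Proof.
apply/msetP => x; rewrite mflattenE /msplit big_seq_mset big_filter big_mkcond msetE2.
by rewrite !big_cons big_nil /= addn0; do 2 case: eqP => [->|_]; rewrite ?mset0E.
Qed.

Lemma mpart_mflatten (X : choiceType) (M : {mset {mset X}}) (s : {mset {mset {mset X}}}) :
  {in M, forall A, A != mset0} -> is_mpart M s ->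
  is_mpart (mflatten M) (mset_map mflatten s).
Proof.
move=> M_neq0 Ms; have s_neq0 := mpart_neq0 Ms; apply/mpartP; split.
  move=> _ /mset_mapP [B Bs ->]; rewrite mflatten_eq0 ?s_neq0 // => A AB.
  exact/M_neq0/(mpart_mem Ms Bs AB).
apply/msetP => x; rewrite !mflattenE big_mset_map (big_mpart _ _ Ms).
by apply: eq_bigr => B _; rewrite mflattenE.
Qed.

Lemma mflatten_le1 (X : choiceType) (D : {mset {mset X}}) E :
  {in D, forall A, A != mset0} -> D = mset0 \/ (exists A, D = [mset A]) ->
  (mflatten D != mset0) && (mflatten D == E) = D E :> nat.
Proof.
move=> D_neq0 [-> | [A D1]]; first by rewrite mflatten0 eqxx mset0E.
rewrite D1 mflatten1 D_neq0 ?D1 ?mset11 // msetnE eq_sym.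
by case: (E == A).
Qed.

Lemma prestr_singletons (X : choiceType) (U : pred X) (s : {mset {mset X}}) (P : {mset X})
    B :
  prestr U s = singletons P -> B \in s ->
  mrestr U B = mset0 \/ exists A, mrestr U B = [mset A].
Proof.
move=> sP Bs; have [|UB_neq0] := eqVneq (mrestr U B) mset0; [by left | right].
have : mrestr U B \in prestr U s.
  by rewrite in_mset prestrE (big_rem B Bs) /= UB_neq0 eqxx.
by rewrite sP => /mset_mapP [A _ ->]; exists A.
Qed.

Section BlockRestriction.
Variables (X : choiceType) (S T : {mset X}) (pi tau : {mset {mset X}}).
Hypotheses (ST : mset_disjoint S T) (Spi : is_mpart S pi) (Ttau : is_mpart T tau).

Lemma mpart_disjoint : mset_disjoint pi tau.
Proof.
move=> A; rewrite -in_mset => Api; have /mset_neq0P [x xA] := mpart_neq0 Spi Api.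
have xS : 0 < S x by rewrite -in_mset (mpart_mem Spi Api xA).
by apply/mset_eq0P/negP => /(mpart_mem Ttau)/(_ xA); rewrite in_mset (ST xS).
Qed.

Lemma mpart_msetD_neq0 : {in pi `+` tau, forall A, A != mset0}.
Proof. by move=> A; rewrite in_msetD => /orP [/(mpart_neq0 Spi) | /(mpart_neq0 Ttau)]. Qed.

Lemma mrestr_pi_block A : A \in pi -> mrestr (Defs.msupp S) A = A.
Proof.
move=> Api; apply: mrestr_id => x xA; rewrite /Defs.msupp -in_mset.
exact: mpart_mem Spi Api xA.
Qed.

Lemma mrestr_tau_block A : A \in tau -> mrestr (Defs.msupp S) A = mset0.
Proof.
move=> Atau; apply: mrestr_eq0 => x /(mpart_mem Ttau Atau).
by rewrite in_mset /Defs.msupp => /(mset_disjoint_sym ST) ->.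
Qed.

Lemma mrestr_mflatten (B : {mset {mset X}}) : {subset B <= pi `+` tau} ->
  mrestr (Defs.msupp S) (mflatten B) = mflatten (mrestr (Defs.msupp pi) B).
Proof.
move=> Bpt; apply/msetP => x; rewrite mrestrE !mflattenE big_mrestr [RHS]big_mkcond /=.
transitivity (\sum_(A <- B) mrestr (Defs.msupp S) A x).
  by under [RHS]eq_bigr do rewrite mrestrE; case: (Defs.msupp S x); rewrite ?big1_eq.
apply: eq_big_seq => A /Bpt; rewrite in_msetD /Defs.msupp -in_mset => /orP [Api | Atau].
  by rewrite Api mrestr_pi_block.
have /negPf -> := mset_disjoint_notin (mset_disjoint_sym mpart_disjoint) Atau.
by rewrite mrestr_tau_block // mset0E.
Qed.

Lemma prestr_mflatten (s : {mset {mset {mset X}}}) :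
  is_mpart (pi `+` tau) s -> prestr (Defs.msupp pi) s = singletons pi ->
  prestr (Defs.msupp S) (mset_map mflatten s) = pi.
Proof.
move=> pts s_pi; have mflatten_pi : mset_map mflatten (singletons pi) = pi.
  by rewrite mset_map_comp mset_map_id_in // => A _; apply: mflatten1.
apply/msetP => E; rewrite -[in RHS]mflatten_pi -s_pi mset_mapE big_prestr big_mkcond.
rewrite prestrE big_mset_map; apply: eq_big_seq => B Bs /=.
have Bpt : {subset (B : {mset {mset X}}) <= pi `+` tau} by move=> A; apply: mpart_mem pts Bs.
rewrite mrestr_mflatten // mflatten_eq0 => [|A]; first by case: (_ != _).
by rewrite mem_mrestr => /andP [_ /Bpt]; apply: mpart_msetD_neq0.
Qed.

Lemma mflatten_msplit_block (theta : {mset {mset X}}) C :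
  is_mpart (S `+` T) theta -> C \in theta ->
  mflatten (msplit (Defs.msupp S) (Defs.msupp T) C) = C.
Proof.
move=> STtheta Ctheta; rewrite mflatten_msplit mrestr_msupp_msetD // => x.
exact: mpart_mem STtheta Ctheta.
Qed.

Lemma mrestr_msplit (theta : {mset {mset X}}) C :
  prestr (Defs.msupp S) theta = pi -> C \in theta ->
  mrestr (Defs.msupp pi) (msplit (Defs.msupp S) (Defs.msupp T) C) =
  if mrestr (Defs.msupp S) C != mset0 then [mset mrestr (Defs.msupp S) C] else mset0.
Proof.
move=> theta_pi Ctheta; apply/msetP => D; rewrite mrestrE msplitE /Defs.msupp -in_mset.
set a := mrestr _ C; set b := mrestr _ C.
have a_pi : a != mset0 -> a \in pi.
  by move=> a_neq0; rewrite -theta_pi in_mset prestrE (big_rem C Ctheta) /= a_neq0 eqxx.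
have b_pi : b != mset0 -> b \notin pi.
  case/mset_neq0P => x; rewrite mem_mrestr => /andP [Tx xC]; apply/negP => /(mpart_mem Spi).
  move=> /(_ x); rewrite mem_mrestr Tx xC in_mset => /(_ isT).
  by rewrite /Defs.msupp in Tx; rewrite (mset_disjoint_sym ST Tx).
have [Dpi | Dpi] := boolP (D \in pi) => /=.
  have -> : (b != mset0) && (b == D) = false.
    by apply/negP => /andP [/b_pi + /eqP bD]; rewrite bD Dpi.
  case: (a != mset0); last by rewrite mset0E.
  by rewrite addn0 msetnE eq_sym; case: (D == a).
case: ifPn => [/a_pi a_in | _]; last by rewrite mset0E.
by rewrite msetnE; case: eqP => // DA; rewrite DA a_in in Dpi.
Qed.

Lemma prestr_msplit (theta : {mset {mset X}}) :
  prestr (Defs.msupp S) theta = pi ->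
  prestr (Defs.msupp pi) (mset_map (msplit (Defs.msupp S) (Defs.msupp T)) theta) =
  singletons pi.
Proof.
move=> theta_pi; apply/msetP => E; rewrite prestrE big_mset_map /singletons mset_mapE.
have -> : \sum_(A <- pi) ([mset A] == E) =
          \sum_(A <- prestr (Defs.msupp S) theta) ([mset A] == E) by rewrite theta_pi.
rewrite big_prestr [RHS]big_mkcond; apply: eq_big_seq => C Ctheta.
rewrite (mrestr_msplit theta_pi Ctheta).
by case: (mrestr (Defs.msupp S) C != mset0); rewrite /= ?mset1_neq0 ?eqxx.
Qed.

Lemma mpart_msplit (theta : {mset {mset X}}) :
  is_mpart (S `+` T) theta ->
  prestr (Defs.msupp S) theta = pi -> prestr (Defs.msupp T) theta = tau ->
  is_mpart (pi `+` tau) (mset_map (msplit (Defs.msupp S) (Defs.msupp T)) theta).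
Proof.
move=> STtheta theta_pi theta_tau; split.
  move=> D; rewrite -in_mset => /mset_mapP [C Ctheta ->] C0.
  have := mflatten_msplit_block STtheta Ctheta; rewrite C0 mflatten0 => C_eq0.
  by have := mpart_neq0 STtheta Ctheta; rewrite -C_eq0 eqxx.
move=> A; rewrite msetE2 big_mset_map.
under eq_bigr do rewrite msplitE.
by rewrite big_split /= -!prestrE theta_pi theta_tau.
Qed.

End BlockRestriction.

Lemma msplit_mflatten (X : choiceType) (S T : {mset X}) (pi tau : {mset {mset X}})
    (s : {mset {mset {mset X}}}) (B : {mset {mset X}}) :
  mset_disjoint S T -> is_mpart S pi -> is_mpart T tau ->
  msharp pi tau (singletons pi) (singletons tau) s -> B \in s ->
  msplit (Defs.msupp S) (Defs.msupp T) (mflatten B) = B.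
Proof.
move=> ST Spi Ttau [pts [s_pi s_tau]] Bs.
have Bpt : {subset B <= pi `+` tau} by move=> A; apply: mpart_mem pts Bs.
have Btp : {subset B <= tau `+` pi} by move=> A; rewrite msetDC; apply: Bpt.
have restr_neq0 (U : pred {mset X}) : {in mrestr U B, forall A, A != mset0}.
  by move=> A; rewrite mem_mrestr => /andP [_ /Bpt]; apply: (mpart_msetD_neq0 Spi Ttau).
apply/msetP => E; rewrite msplitE (mrestr_mflatten ST Spi Ttau Bpt).
rewrite (mrestr_mflatten (mset_disjoint_sym ST) Ttau Spi Btp).
have le1_pi := prestr_singletons s_pi Bs; have le1_tau := prestr_singletons s_tau Bs.
rewrite !mflatten_le1 ?restr_neq0 // -msetE2 mrestr_msupp_msetD //.
exact: mpart_disjoint ST Spi Ttau.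
Qed.

Lemma sum_msharp_singletons (V : nmodType) (F : seq nat -> V) (X : choiceType)
    (S T : {mset X}) (pi tau : {mset {mset X}}) :
  mset_disjoint S T -> is_mpart S pi -> is_mpart T tau ->
  (\sum_(s \in msharp pi tau (singletons pi) (singletons tau)) F (mtilde s) =
   \sum_(theta \in msharp S T pi tau) F (mtilde theta))%R.
Proof.
move=> ST Spi Ttau; have TS := mset_disjoint_sym ST.
set split_ST := msplit (Defs.msupp S) (Defs.msupp T).
have flattenK s : msharp pi tau (singletons pi) (singletons tau) s ->
    {in s, cancel mflatten split_ST}.
  by move=> s_sharp B; apply: msplit_mflatten s_sharp.
have flatten_bij : set_bij (msharp pi tau (singletons pi) (singletons tau)) (msharp S T pi tau)
    (mset_map mflatten).
  split.
  - move=> s [pts [s_pi s_tau]]; split.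
      have <- : mflatten (pi `+` tau) = S `+` T.
        by case/mpartP: Spi => _ ->; case/mpartP: Ttau => _ ->; rewrite mflattenD.
      exact: mpart_mflatten (mpart_msetD_neq0 Spi Ttau) pts.
    split; first exact: (prestr_mflatten ST Spi Ttau pts s_pi).
    by apply: (prestr_mflatten TS Ttau Spi _ s_tau); rewrite msetDC.
  - move=> s1 s2 /set_mem s1_sharp /set_mem s2_sharp eq_s12.
    by rewrite -(mset_mapK_in (flattenK _ s1_sharp)) eq_s12 (mset_mapK_in (flattenK _ s2_sharp)).
  - move=> theta [STtheta [theta_pi theta_tau]]; exists (mset_map split_ST theta).
      split; first exact: mpart_msplit.
      split; first exact: prestr_msplit.
      rewrite (@eq_in_mset_map _ _ split_ST (msplit (Defs.msupp T) (Defs.msupp S))) => [|C _].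
        exact: prestr_msplit.
      exact: msplitC.
    rewrite mset_map_comp mset_map_id_in // => C Ctheta.
    exact: mflatten_msplit_block STtheta Ctheta.
rewrite (reindex_fsbig _ _ _ _ flatten_bij); apply: eq_fsbigr => s /set_mem s_sharp.
by rewrite (mtilde_mset_map (can_in_inj (flattenK _ s_sharp))).
Qed.

Lemma fsbig_fibers (R : Type) (idx : R) (op : Monoid.com_law idx) (I J : choiceType)
    (A : set I) (B : set J) (h : I -> J) (F : I -> R) :
  finite_set A -> finite_set B -> (forall i, A i -> B (h i)) ->
  \big[op/idx]_(i \in A) F i =
  \big[op/idx]_(j \in B) \big[op/idx]_(i \in [set i | A i /\ h i = j]%classic) F i.
Proof.
move=> finA finB hAB.
transitivity (\big[op/idx]_(j \in B) \big[op/idx]_(i \in A)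
    if i \in [set i | h i = j]%classic then F i else idx); last first.
  by apply: eq_fsbigr => j _; rewrite -fsbig_mkcondr.
rewrite exchange_fsbig //; apply: eq_fsbigr => i /set_mem Ai.
rewrite (fsbigD1 (h i)) //; last exact: hAB.
rewrite ifT; last exact/mem_set.
rewrite fsbig1 ?Monoid.mulm1 // => j [_ /= hij].
by rewrite ifF //; apply/negP => /set_mem /esym.
Qed.

Lemma mulr_fsbig (R : comPzSemiRingType) (I J : choiceType) (A : set I) (B : set J)
    (f : I -> R) (g : J -> R) :
  finite_set A -> finite_set B ->
  ((\sum_(i \in A) f i) * (\sum_(j \in B) g j) =
   \sum_(p \in (A `*` B)%classic) f p.1 * g p.2)%R.
Proof.
move=> finA finB; rewrite -(pair_fsbig _ (fun a b => (f a * g b)%R)) // mulrC fsbig_distrr //.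
by apply: eq_fsbigr => i _; rewrite /= mulrC fsbig_distrr.
Qed.

Section HtildeExpansion.
Local Open Scope ring_scope.
Variable ht : seq nat -> Symf.
Hypothesis ht_rec : forall l : seq nat, is_partition l ->
  hl l = \sum_(sigma \in is_mpart (mset_of_part l)) ht (mtilde sigma).

Lemma sum_mpart_relabel (X Y : choiceType) (f : X -> Y) (g : Y -> X) (M : {mset X}) :
  {in M, cancel f g} ->
  \sum_(s \in is_mpart M) ht (mtilde s) = \sum_(t \in is_mpart (mset_map f M)) ht (mtilde t).
Proof.
move=> fK.
have blockK P : is_mpart M P -> {in P, cancel (mset_map f) (mset_map g)}.
  by move=> MP A AP; apply: mset_mapK_in => x xA; apply/fK/(mpart_mem MP AP xA).
have fbij : set_bij (is_mpart M) (is_mpart (mset_map f M)) (mset_map (mset_map f)).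
  split.
  - by move=> P; apply: mpart_mset_map.
  - move=> P1 P2 /set_mem MP1 /set_mem MP2 eqP12.
    by rewrite -(mset_mapK_in (blockK _ MP1)) eqP12 (mset_mapK_in (blockK _ MP2)).
  - move=> Q fMQ; exists (mset_map (mset_map g) Q).
      by rewrite -[M](mset_mapK_in fK); apply: mpart_mset_map.
    apply: mset_mapK_in => B BQ; apply: mset_mapK_in => y yB.
    by have /mset_mapP [x xM ->] := mpart_mem fMQ BQ yB; rewrite /= fK.
rewrite (reindex_fsbig _ _ _ _ fbij); apply: eq_fsbigr => P /set_mem MP; congr ht.
by rewrite (mtilde_mset_map (can_in_inj (blockK _ MP))).
Qed.

Lemma hmult_expansion (X : choiceType) (M : {mset X}) :
  hmult M = \sum_(s \in is_mpart M) ht (mtilde s).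
Proof.
have finsupp0 (Y : choiceType) : finsupp (mset0 : {mset Y}) = fset0.
  by apply/fsetP => A; rewrite msuppE in_mset0.
have mtilde0 (Y : choiceType) : mtilde (mset0 : {mset {mset Y}}) = [::].
  by rewrite /mtilde finsupp0.
have [->|[x0 x0M]] := mset_0Vmem M.
  have mset_of_nil : mset_of_part [::] = mset0.
    by apply/msetP => x; rewrite mset_seqE mset0E.
  have := ht_rec (l := [::]) isT.
  rewrite /hl big_nil mset_of_nil !mpart_mset0 !fsbig_set1 !mtilde0 => <-.
  by rewrite /hmult finsupp0 big_seq_fset0.
set s := sort (relpre M geq) (finsupp M).
have s_uniq : uniq s by rewrite sort_uniq fset_uniq.
have mem_s x : (x \in s) = (x \in M) by rewrite mem_sort msuppE.
set l := [seq M x | x <- s].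
have l_part : is_partition l.
  apply/andP; split.
    have -> : l = sort geq [seq M x | x <- finsupp M] by rewrite sort_map.
    exact: sort_sorted geq_total _.
  by apply/allP => n /mapP [x]; rewrite mem_s => xM ->; rewrite mset_gt0.
(* Label the distinct elements of M by 1, 2, ... in order of decreasing
   multiplicity; this turns M into mset_of_part l. *)
pose f x := (index x s).+1.
pose g i := nth x0 s i.-1.
have fK : {in M, cancel f g} by move=> x xM; rewrite /f /g /= nth_index // mem_s.
have fM : mset_map f M = mset_of_part l.
  apply/msetP => j; rewrite mset_mapE /mset_of_part mset_seqE count_flatten -map_comp sumn_map.
  have supp_s : perm_eq (finsupp M) s by rewrite perm_sym; apply/permEl/perm_sort.
  rewrite sum_mset (perm_big _ supp_s).
  rewrite -[in LHS](mkseq_nth x0 s) /mkseq big_map size_map.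
  apply: eq_big_seq => i; rewrite mem_iota add0n => /andP [_ lt_is] /=.
  by rewrite count_nseq /f index_uniq // (nth_map x0) // mulnC.
have -> : hmult M = hl l.
  by rewrite /hl /hmult big_map (perm_big _ (permEl (perm_sort _ _))).
by rewrite ht_rec // -fM -(sum_mpart_relabel fK).
Qed.

Lemma sum_mpart_pairs (X : choiceType) (P Q : {mset X}) : mset_disjoint P Q ->
  \sum_(ab \in (is_mpart P `*` is_mpart Q)%classic) ht (mtilde ab.1) * ht (mtilde ab.2) =
  \sum_(ab \in (is_mpart P `*` is_mpart Q)%classic)
    \sum_(s \in msharp P Q ab.1 ab.2) ht (mtilde s).
Proof.
move=> PQ; have QP := mset_disjoint_sym PQ.
rewrite -(mulr_fsbig (fun a => ht (mtilde a)) (fun b => ht (mtilde b))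
  (finite_mpart P) (finite_mpart Q)).
rewrite -!hmult_expansion -(hmultD PQ) hmult_expansion.
pose restr s := (prestr (Defs.msupp P) s, prestr (Defs.msupp Q) s).
have restr_part s : is_mpart (P `+` Q) s -> (is_mpart P `*` is_mpart Q)%classic (restr s).
  move=> PQs; split; first by rewrite -[P in is_mpart P](mrestr_msuppD PQ); apply: mpart_prestr.
  by rewrite -[Q in is_mpart Q](mrestr_msuppD QP) msetDC; apply: mpart_prestr.
have fin_pairs := finite_setX (finite_mpart P) (finite_mpart Q).
rewrite (fsbig_fibers _ _ (finite_mpart _) fin_pairs restr_part).
apply: eq_fsbigr => -[a b] _; apply: eq_fsbigl; apply/funext => s; apply/propext.
rewrite /msharp /=; split=> [[PQs [<- <-]] | [PQs [<- <-]]] //.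
Qed.

Lemma ht_mul_msharp (X : choiceType) (S T : {mset X}) (pi tau : {mset {mset X}}) :
  mset_disjoint S T -> is_mpart S pi -> is_mpart T tau ->
  ht (mtilde pi) * ht (mtilde tau) = \sum_(theta \in msharp S T pi tau) ht (mtilde theta).
Proof.
move sizes : (size pi + size tau)%N => n.
elim/ltn_ind: n X S T pi tau sizes => n IHn X S T pi tau sizes ST Spi Ttau.
have pi_tau := mpart_disjoint ST Spi Ttau.
pose finest := (singletons pi, singletons tau).
have fin_pairs := finite_setX (finite_mpart pi) (finite_mpart tau).
have finest_pair : (is_mpart pi `*` is_mpart tau)%classic finest.
  by split; apply: mpart_singletons.
have coarser_pairs :
    \sum_(ab \in (is_mpart pi `*` is_mpart tau `\ finest)%classic)
      ht (mtilde ab.1) * ht (mtilde ab.2) =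
    \sum_(ab \in (is_mpart pi `*` is_mpart tau `\ finest)%classic)
      \sum_(s \in msharp pi tau ab.1 ab.2) ht (mtilde s).
  apply: eq_fsbigr => -[a b] /set_mem [[/= pi_a tau_b] /eqP ab_finest].
  have fewer_blocks := mpart_pair_size_lt pi_a tau_b ab_finest; rewrite sizes in fewer_blocks.
  exact: (IHn _ fewer_blocks _ pi tau a b erefl pi_tau pi_a tau_b).
have := sum_mpart_pairs pi_tau.
rewrite (fsbigD1 finest _ _ fin_pairs finest_pair) [RHS](fsbigD1 finest _ _ fin_pairs finest_pair).
rewrite coarser_pairs => /addIr /=; rewrite !mtilde_singletons => ->.
exact: sum_msharp_singletons.
Qed.

End HtildeExpansion.

Local Open Scope ring_scope.

Theorem proposition21 :
  forall ht : seq nat -> Symf,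
  (* ht is the induced trivial character basis h~: the defining recursion *)
  (forall l : seq nat, is_partition l ->
     hl l = \sum_(sigma \in is_mpart (mset_of_part l)) ht (mtilde sigma)) ->
  forall (K : choiceType) (S T : {mset K}) (pi tau : {mset {mset K}}),
  (forall x : K, (0 < S x)%N -> T x = 0%N) ->
  is_mpart S pi -> is_mpart T tau ->
  ht (mtilde pi) * ht (mtilde tau) =
    \sum_(theta \in msharp S T pi tau) ht (mtilde theta).
Proof.
move=> ht ht_rec K S T pi tau ST Spi Ttau.
exact: (ht_mul_msharp ht_rec ST Spi Ttau).
Qed.
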